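(* There exist integers $n\ge2$ and $D\ge1$ and a set $X_n=\{\mathbf{x}^0,\ldots,\mathbf{x}^{n-1}\}\subseteq\{0,1\}^D$ of $n$ pairwise distinct vectors such that there is no three-layer Boolean threshold network with layer sizes $D$, $\lceil\log_2 n\rceil$, $D$ that is a perfect autoencoder for $X_n$ (with the second layer as middle layer).
   Context: A Boolean threshold function is a map $\{0,1\}^h\to\{0,1\}$, $\mathbf{u}\mapsto[\mathbf{w}\cdot\mathbf{u}\ge\theta]$ (value $1$ iff $\mathbf{w}\cdot\mathbf{u}\ge\theta$) with $\mathbf{w}\in\mathbb{Z}^h,\theta\in\mathbb{Z}$. A three-layer Boolean threshold network with layer sizes $D,d,D$ consists of maps $\mathbf{f}:\{0,1\}^D\to\{0,1\}^d$ and $\mathbf{g}:\{0,1\}^d\to\{0,1\}^D$ each of whose coordinates is a Boolean threshold function, computing $\mathbf{x}\mapsto\mathbf{g}(\mathbf{f}(\mathbf{x}))$. It is a perfect autoencoder for $X_n$ if $\mathbf{g}(\mathbf{f}(\mathbf{x}^i))=\mathbf{x}^i$ for all $i$. *)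

From mathcomp Require Import all_boot all_order all_algebra.
Set Implicit Arguments. Unset Strict Implicit. Unset Printing Implicit Defensive.
Import GRing.Theory Num.Theory.
Local Open Scope ring_scope.

Definition bvec (h : nat) := {ffun 'I_h -> bool}.

Definition is_threshold_fun (h : nat) (t : bvec h -> bool) : Prop :=
  exists (w : 'I_h -> int) (theta : int),
    forall u : bvec h, t u = (theta <= \sum_(i < h) w i * (u i : nat)%:Z).

Definition threshold_layer (a b : nat) (F : bvec a -> bvec b) : Prop :=
  forall j : 'I_b, is_threshold_fun (fun u => F u j).

Definition perfect_autoencoder (D d n : nat) (x : 'I_n -> bvec D) : Prop :=
  exists (f : bvec D -> bvec d) (g : bvec d -> bvec D),
    threshold_layer f /\ threshold_layer g /\ forall i, g (f (x i)) = x i.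
Arguments perfect_autoencoder D d n x : clear implicits.

(* Take the four even-weight vectors 000, 011, 101, 110 of {0,1}^3.  An
   encoder into {0,1}^2 must be injective on them, hence a bijection onto
   {0,1}^2, so some point x^k is encoded by the complement of the code of
   x^0.  The decoder coordinate vanishing exactly at x^0 and x^k then vanishes
   exactly on a complementary pair {v, ~v} of {0,1}^2, i.e. it is an XNOR.
   No threshold function does this: whenever u + u' = v + v' pointwise, the
   weighted sums satisfy s(u) + s(u') = s(v) + s(v'), so a threshold function
   true at u and u' is true at v or at v'. *)

From mathcomp Require Import all_boot all_order all_algebra.
From mathcomp Require Import zify.
Import Order.TTheory GRing.Theory Num.Theory.

Lemma threshold_fun_asummable (h : nat) (t : bvec h -> bool) (u u' v v' : bvec h) :
  is_threshold_fun t -> (forall i, u i + u' i = v i + v' i)%N ->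
  t u -> t u' -> t v || t v'.
Proof.
move=> [w [theta tE]] uv.
pose s (z : bvec h) := (\sum_(i < h) w i * (z i : nat)%:Z)%R.
have sE : (s u + s u' = s v + s v')%R.
  by rewrite /s -!big_split; apply: eq_bigr => i _ /=; rewrite -!mulrDr -!PoszD uv.
rewrite !tE -/(s u) -/(s u') -/(s v) -/(s v') => su su'.
by apply/contraT; rewrite negb_or -!ltNge => /andP[sv sv']; lia.
Qed.

Definition bcompl {h : nat} (u : bvec h) : bvec h := [ffun i => ~~ u i].

Lemma bcomplK {h : nat} : involutive (@bcompl h).
Proof. by move=> u; apply/ffunP => i; rewrite !ffunE negbK. Qed.

Lemma addn_bcompl {h : nat} (u : bvec h) (i : 'I_h) : (u i + bcompl u i = 1)%N.
Proof. by rewrite ffunE; case: (u i). Qed.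

Lemma bcompl_neq {h : nat} (u : bvec h.+1) : u != bcompl u.
Proof. by apply/eqP => /ffunP/(_ ord0); rewrite ffunE; case: (u ord0). Qed.

Lemma threshold_fun_complement_pair (h : nat) (t : bvec h -> bool) (u v : bvec h) :
  is_threshold_fun t -> t u -> t (bcompl u) -> t v || t (bcompl v).
Proof.
by move=> /threshold_fun_asummable; apply=> i; rewrite !addn_bcompl.
Qed.

Lemma xnor_not_threshold_fun (h : nat) (t : bvec h.+2 -> bool) (v : bvec h.+2) :
  (forall u, t u = (u != v) && (u != bcompl v)) -> ~ is_threshold_fun t.
Proof.
move=> tE /threshold_fun_complement_pair tT.
pose u : bvec h.+2 := [ffun i => if i == ord0 then ~~ v i else v i].
have uv : u != v by apply/eqP => /ffunP/(_ ord0); rewrite ffunE; case: (v _).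
have uvc : u != bcompl v.
  by apply/eqP => /ffunP/(_ ord_max); rewrite !ffunE; case: (v _).
have cuv : bcompl u != v by rewrite -[v]bcomplK (inj_eq (can_inj bcomplK)).
have cucv : bcompl u != bcompl v by rewrite (inj_eq (can_inj bcomplK)).
have := tT u v; rewrite !tE uv uvc cuv cucv !eqxx andbF /=.
by move/(_ isT isT).
Qed.

(* [even_points 0 = 000], and [even_points (j+1)] has its only zero at [j]. *)
Definition even_points (i : 'I_4) : bvec 3 :=
  [ffun j => (i != ord0) && (i != lift ord0 j)].

Lemma even_points_inj : injective even_points.
Proof.
move=> i i' /ffunP E; apply/val_inj.
move: (E ord0) (E (lift ord0 ord0)) (E ord_max); rewrite !ffunE; clear E.
by case: i i' => [[|[|[|[|?]]]] ?] [[|[|[|[|?]]]] ?].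
Qed.

Lemma even_points_no_autoencoder : ~ perfect_autoencoder 3 2 4 even_points.
Proof.
move=> [f [g [_ [gT gfx]]]].
pose c i := f (even_points i).
have c_inj : injective c.
  by move=> i i' /(congr1 g); rewrite !gfx => /even_points_inj.
have c_onto u : exists i, u = c i.
  by apply/codomP/inj_card_onto => //; rewrite card_ffun !card_ord card_bool.
have [k ck] := c_onto (bcompl (c ord0)).
case: (unliftP ord0 k) => [j kE | k0]; last first.
  by move: (bcompl_neq (c ord0)); rewrite ck k0 eqxx.
apply: (@xnor_not_threshold_fun 0 (fun u => g u j) (c ord0)) (gT j) => u.
have [i ->] := c_onto u.
by rewrite gfx ffunE -kE ck !(inj_eq c_inj).
Qed.

Theorem corollary17 :
  exists (n D : nat) (x : 'I_n -> bvec D),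
    (2 <= n)%N /\ (1 <= D)%N /\ injective x /\
    ~ perfect_autoencoder D (up_log 2 n) n x.
Proof.
exists 4%N, 3%N, even_points; do 2!split=> //; split; first exact: even_points_inj.
by rewrite (@up_log_eq 2 1 4) //; apply: even_points_no_autoencoder.
Qed.
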